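(* Let $c\in(0,\sqrt2)$, $d_2>0$, and for $n_2\in\mathbb{N}_0$ let $\tilde n_2=\frac{n_2}{2d_2}$ and $l_{n_2}(\xi_1)=(2\pi)^4(\xi_1^2+\tilde n_2^2)^2-c^2(2\pi\xi_1)^2+1$. Then $$\min_{\xi_1\in\mathbb{R}}l_{n_2}(\xi_1)=\begin{cases}c^2(2\pi\tilde n_2)^2+1-\frac{c^4}{4}&\text{if }0\le n_2\le\frac{d_2c}{\pi\sqrt2},\\(2\pi\tilde n_2)^4+1&\text{otherwise.}\end{cases}$$ Furthermore, if $n_2\ge\frac{d_2c}{\pi}$, then $l_{n_2}(\xi_1)\ge\frac{(2\pi)^4}{2}(\tilde n_2^2+\xi_1^2)^2$ for all $\xi_1\in\mathbb{R}$. In particular, for every $N\in\mathbb{N}$ with $N>\frac{d_2c}{\pi}$, $$\sum_{n_2=N+1}^{\infty}\left\|\frac{1}{l_{n_2}}\right\|_{L^2(\mathbb{R})}^2\le\frac{5(2d_2)^7}{48(2\pi)^7N^6}.$$ *)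

From HB Require Import structures.
From mathcomp Require Import all_boot all_order all_algebra.
From mathcomp Require Import all_classical all_reals all_analysis.
Set Implicit Arguments. Unset Strict Implicit. Unset Printing Implicit Defensive.
Import Order.TTheory GRing.Theory Num.Theory.
Local Open Scope ring_scope.

Definition ntilde (R : realType) (d2 : R) (n2 : nat) : R := n2%:R / (2 * d2).

Definition lfun (R : realType) (c d2 : R) (n2 : nat) (xi : R) : R :=
  (2 * pi) ^+ 4 * (xi ^+ 2 + (ntilde d2 n2) ^+ 2) ^+ 2
  - c ^+ 2 * (2 * pi * xi) ^+ 2 + 1.

Definition L2sq_inv_l (R : realType) (c d2 : R) (n2 : nat) : \bar R :=
  (\int[@lebesgue_measure R]_(x in [set: R]) (((lfun c d2 n2 x)^-1) ^+ 2)%:E)%E.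

From HB Require Import structures.
From mathcomp Require Import all_boot all_order all_algebra.
From mathcomp Require Import all_classical all_reals all_analysis.
From mathcomp Require Import ring lra measurable_realfun.
Set Implicit Arguments. Unset Strict Implicit. Unset Printing Implicit Defensive.
Import Order.TTheory GRing.Theory Num.Theory numFieldNormedType.Exports.
Local Open Scope ring_scope.

(* With s = 2 pi xi and b = 2 pi ntilde, l = (s^2 + b^2)^2 - c^2 s^2 + 1
   = (s^2 + b^2 - c^2/2)^2 + c^2 b^2 + 1 - c^4/4, and l - (b^4 + 1) =
   s^2 (s^2 + 2 b^2 - c^2): the minimum is reached at s^2 = c^2/2 - b^2 or at
   s = 0 according to the sign of c^2 - 2 b^2.  When c <= b,
   c^2 s^2 <= b^2 s^2 <= (s^2 + b^2)^2 / 4, so l >= 3/4 (s^2 + b^2)^2.  As l is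
   even, this bounds ||1/l||^2 by twice the integral over [0, +oo[ of a multiple
   of (2 ntilde + xi)^-8, which is explicit.  The resulting multiples of n^-7
   are summed with the telescoping bound n^-7 <= ((n-1)^-6 - n^-6) / 6, and the
   constant of the statement follows as soon as pi >= 2. *)

Section Quartic.
Variable R : realFieldType.
Implicit Types c b s : R.

Definition quartic c b s : R := (s ^+ 2 + b ^+ 2) ^+ 2 - c ^+ 2 * s ^+ 2 + 1.

Lemma quarticE c b s :
  quartic c b s = (s ^+ 2 + b ^+ 2 - c ^+ 2 / 2) ^+ 2 + (c ^+ 2 * b ^+ 2 + 1 - c ^+ 4 / 4).
Proof. by rewrite /quartic; field. Qed.

Lemma quartic_ge_vertex c b s : c ^+ 2 * b ^+ 2 + 1 - c ^+ 4 / 4 <= quartic c b s.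
Proof. by rewrite quarticE lerDr sqr_ge0. Qed.

Lemma quartic_vertex c b s : s ^+ 2 = c ^+ 2 / 2 - b ^+ 2 ->
  quartic c b s = c ^+ 2 * b ^+ 2 + 1 - c ^+ 4 / 4.
Proof. by move=> s2; rewrite quarticE s2; ring. Qed.

Lemma quartic0 c b : quartic c b 0 = b ^+ 4 + 1.
Proof. by rewrite /quartic; ring. Qed.

Lemma quartic_ge_at0 c b s : c ^+ 2 <= 2 * b ^+ 2 -> b ^+ 4 + 1 <= quartic c b s.
Proof.
move=> cb; rewrite -subr_ge0.
have -> : quartic c b s - (b ^+ 4 + 1) = s ^+ 2 * (s ^+ 2 + (2 * b ^+ 2 - c ^+ 2)).
  by rewrite /quartic; ring.
by apply: mulr_ge0; [exact: sqr_ge0 | apply: addr_ge0; rewrite ?sqr_ge0 ?subr_ge0].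
Qed.

Lemma quartic_ge_sqr c b s : c ^+ 2 <= b ^+ 2 ->
  3 / 4 * (s ^+ 2 + b ^+ 2) ^+ 2 <= quartic c b s.
Proof.
move=> cb; have s2 := sqr_ge0 s; have sb := sqr_ge0 (s ^+ 2 - b ^+ 2).
rewrite /quartic; nra.
Qed.

End Quartic.

Section Lfun.
Variables (R : realType) (c d2 : R).
Hypothesis d2_gt0 : 0 < d2.

Lemma lfunE n xi : lfun c d2 n xi = quartic c (2 * pi * ntilde d2 n) (2 * pi * xi).
Proof. by rewrite /lfun /quartic; ring. Qed.

Lemma mul2pi_ntilde n : 2 * pi * ntilde d2 n = pi * n%:R / d2.
Proof. by rewrite /ntilde; field; rewrite gt_eqF. Qed.

Lemma mul2pi_ntilde_ge0 n : 0 <= 2 * pi * ntilde d2 n.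
Proof.
by rewrite mul2pi_ntilde; apply: divr_ge0; [apply: mulr_ge0; rewrite ?pi_ge0 | apply: ltW].
Qed.

Lemma mul2pi_ntilde_ge n : d2 * c / pi <= n%:R -> c <= 2 * pi * ntilde d2 n.
Proof.
rewrite mul2pi_ntilde ler_pdivrMr ?pi_gt0 // ler_pdivlMr //.
by rewrite mulrC [pi * _]mulrC.
Qed.

Lemma le_threshold_sqrt2E n : 0 < c ->
  (n%:R <= d2 * c / (pi * Num.sqrt 2)) = (2 * (2 * pi * ntilde d2 n) ^+ 2 <= c ^+ 2).
Proof.
move=> c_gt0; have pi_gt0 := pi_gt0 R.
have sqrt2_gt0 : 0 < Num.sqrt 2 :> R by rewrite sqrtr_gt0.
have -> : (n%:R <= d2 * c / (pi * Num.sqrt 2)) = (2 * pi * ntilde d2 n * Num.sqrt 2 <= c).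
  rewrite mul2pi_ntilde ler_pdivlMr ?mulr_gt0 // mulrAC ler_pdivrMr //.
  by congr (_ <= _); ring.
have b_ge0 : 0 <= 2 * pi * ntilde d2 n * Num.sqrt 2.
  by apply: mulr_ge0; [exact: mul2pi_ntilde_ge0 | exact: ltW].
rewrite -ler_sqr ?nnegrE ?(ltW c_gt0) //.
by rewrite exprMn sqr_sqrtr ?ler0n // mulrC.
Qed.

Lemma lfun_minimum n : 0 < c ->
  let m := if n%:R <= d2 * c / (pi * Num.sqrt 2)
           then c ^+ 2 * (2 * pi * ntilde d2 n) ^+ 2 + 1 - c ^+ 4 / 4
           else (2 * pi * ntilde d2 n) ^+ 4 + 1 in
  (forall xi, m <= lfun c d2 n xi) /\ (exists xi, lfun c d2 n xi = m).
Proof.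
move=> c_gt0; rewrite /= le_threshold_sqrt2E //; set b := 2 * pi * ntilde d2 n.
have pi2_gt0 : 0 < 2 * pi :> R by rewrite mulr_gt0 ?pi_gt0.
case: ifPn => [inner | /negbTE edge]; split.
- by move=> xi; rewrite lfunE quartic_ge_vertex.
- exists (Num.sqrt (c ^+ 2 / 2 - b ^+ 2) / (2 * pi)).
  rewrite lfunE quartic_vertex // mulrC divfK ?gt_eqF // sqr_sqrtr //.
  by rewrite subr_ge0 ler_pdivlMr //; lra.
- by move=> xi; rewrite lfunE quartic_ge_at0 // ltW // ltNge edge.
- by exists 0; rewrite lfunE mulr0 quartic0.
Qed.

Lemma lfun_ge_sqr n xi : 0 <= c -> c <= 2 * pi * ntilde d2 n ->
  3 / 4 * (2 * pi) ^+ 4 * (ntilde d2 n ^+ 2 + xi ^+ 2) ^+ 2 <= lfun c d2 n xi.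
Proof.
move=> c_ge0 c_le; rewrite lfunE.
have -> : 3 / 4 * (2 * pi) ^+ 4 * (ntilde d2 n ^+ 2 + xi ^+ 2) ^+ 2 =
    3 / 4 * ((2 * pi * xi) ^+ 2 + (2 * pi * ntilde d2 n) ^+ 2) ^+ 2 by ring.
by apply: quartic_ge_sqr; rewrite ler_sqr // nnegrE // (le_trans c_ge0).
Qed.

Lemma lfun_ge_half n xi : 0 < c -> d2 * c / pi <= n%:R ->
  (2 * pi) ^+ 4 / 2 * (ntilde d2 n ^+ 2 + xi ^+ 2) ^+ 2 <= lfun c d2 n xi.
Proof.
move=> c_gt0 /mul2pi_ntilde_ge c_le; apply: le_trans (lfun_ge_sqr _ (ltW c_gt0) c_le).
have := sqr_ge0 (ntilde d2 n ^+ 2 + xi ^+ 2); have := pi_gt0 R; nra.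
Qed.

End Lfun.

Section InvPowSum.
Variable R : realFieldType.

Lemma exprSD1_ge (x : R) k : 0 <= x -> x ^+ k * (x + k.+1%:R) <= (x + 1) ^+ k.+1.
Proof.
move=> x_ge0; elim: k => [|k IH]; first by rewrite expr0 mul1r expr1.
rewrite [_ ^+ k.+2]exprS; apply: le_trans (ler_wpM2l (addr_ge0 x_ge0 ler01) IH).
have := exprn_ge0 k x_ge0; have := ler0n R k.
rewrite exprS -[k.+2%:R]natr1 -[k.+1%:R]natr1; nra.
Qed.

Lemma inv_exprSS_le_telescope (x : R) k : 0 < x ->
  ((x + 1) ^+ k.+2)^-1 <=
    ((k.+1%:R * x ^+ k.+1)^-1) - ((k.+1%:R * (x + 1) ^+ k.+1)^-1).
Proof.
move=> x_gt0; have x_ge0 := ltW x_gt0.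
have bernoulli := exprSD1_ge k x_ge0.
have P_gt0 : 0 < x ^+ k := exprn_gt0 k x_gt0.
have Q_gt0 : 0 < (x + 1) ^+ k.+1 by rewrite exprn_gt0 // addr_gt0.
have m_gt0 : 0 < k.+1%:R :> R by rewrite ltr0n.
rewrite -subr_ge0.
have -> : (k.+1%:R * x ^+ k.+1)^-1 - (k.+1%:R * (x + 1) ^+ k.+1)^-1 - ((x + 1) ^+ k.+2)^-1 =
    ((x + 1) * ((x + 1) ^+ k.+1 - x * x ^+ k) - k.+1%:R * x * x ^+ k) /
    (k.+1%:R * x * x ^+ k * (x + 1) * (x + 1) ^+ k.+1).
  rewrite [x ^+ k.+1]exprS [(x + 1) ^+ k.+2]exprS; field.
  by rewrite (addrC 1) natr1 pnatr_eq0 !gt_eqF ?addr_gt0.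
apply: divr_ge0; last by rewrite !mulr_ge0 ?addr_ge0 // ltW.
nra.
Qed.

Lemma sum_inv_exprSS_le (k N M : nat) : (0 < N)%N ->
  \sum_(N.+1 <= n < M) ((n%:R : R) ^+ k.+2)^-1 <= (k.+1%:R * N%:R ^+ k.+1)^-1.
Proof.
move=> N_gt0; pose g (m : nat) : R := (k.+1%:R * m%:R ^+ k.+1)^-1.
have g_ge0 m : 0 <= g m by rewrite invr_ge0 mulr_ge0 ?exprn_ge0.
have [M_le|N_lt] := leqP M N.+1; first by rewrite big_geq //; apply: g_ge0.
rewrite big_add1 /=; apply: (@le_trans _ _ (\sum_(N <= m < M.-1) (g m - g m.+1))).
  apply: ler_sum_nat => m /andP[N_le _]; rewrite /g -[m.+1%:R]natr1.
  by apply: inv_exprSS_le_telescope; rewrite ltr0n (leq_trans N_gt0).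
rewrite (telescope_sumr_eq (fun m => - g m)); last 2 first.
- by rewrite -ltnS (ltn_predK N_lt) ltnW.
- by move=> m _; rewrite opprK addrC.
by rewrite opprK -/(g N); have := g_ge0 M.-1; lra.
Qed.

End InvPowSum.

Section InvPowIntegral.
Local Open Scope classical_set_scope.
Variables (R : realType) (a : R) (k : nat).
Hypothesis a_gt0 : 0 < a.

Let F (x : R) : R := - (k.+1%:R)^-1 * ((a + x) ^+ k.+1)^-1.

Let shift_gt0 (x : R) : 0 <= x -> 0 < a + x.
Proof. by move=> x_ge0; rewrite ltr_pwDl. Qed.

Let is_derive_F (x : R) : 0 <= x -> is_derive x 1 F (((a + x) ^+ k.+2)^-1).
Proof.
move=> /shift_gt0 /lt0r_neq0 ax_neq0.
have d_shift : is_derive x 1 (fun y : R => a + y) 1.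
  by have := is_deriveD (is_derive_cst a x 1) (is_derive_id x 1); rewrite add0r.
have d_pow := is_deriveX k.+1 d_shift.
have pow_neq0 : ((fun y : R => a + y) ^+ k.+1) x != 0 by rewrite exprfctE expf_neq0.
have d_inv := is_deriveV pow_neq0 d_pow.
have d_F := is_deriveZ (- (k.+1%:R)^-1) d_inv.
have -> : F = - (k.+1%:R)^-1 \*: (fun y => (((fun y : R => a + y) ^+ k.+1) y)^-1).
  by apply/funext => y; rewrite /F exprfctE.
apply: is_derive_eq d_F _.
rewrite exprfctE /= /GRing.scale /= !exprS; field.
by rewrite expf_neq0 // ax_neq0 /= (addrC 1) natr1 pnatr_eq0.
Qed.

Let F_cvgy : F x @[x --> +oo] --> 0.
Proof.
have pow_cvgy : (a + x) ^+ k.+1 @[x --> +oo] --> +oo.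
  apply/cvgryPge => A; near=> x.
  have A_le : A <= x by near: x; apply: nbhs_pinfty_ge; rewrite num_real.
  have x_ge1 : 1 <= x by near: x; apply: nbhs_pinfty_ge; rewrite num_real.
  have x_le : x <= a + x by rewrite lerDr ltW.
  by rewrite (le_trans A_le) // (le_trans x_le) // ler_eXnr // (le_trans x_ge1).
have inv_cvg0 : ((a + x) ^+ k.+1)^-1 @[x --> +oo] --> 0.
  apply/gtr0_cvgV0 => //; near=> x; apply: exprn_gt0; apply: shift_gt0.
  by near: x; apply: nbhs_pinfty_ge; rewrite num_real.
by rewrite -(mulr0 (- (k.+1%:R)^-1)); apply: cvgM (cvg_cst _) inv_cvg0.
Unshelve. all: by end_near.
Qed.

Let inv_shift_pow_cont (x : R) : 0 <= x -> {for x, continuous (fun y : R => ((a + y) ^+ k.+2)^-1)}.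
Proof.
move=> /shift_gt0 ax_gt0; apply: continuousV; first by rewrite expf_neq0 // lt0r_neq0.
apply: (continuous_comp (f := fun y => a + y) (g := fun y => y ^+ k.+2)).
  by apply: continuousD; [exact: cvg_cst | exact: cvg_id].
exact: exprn_continuous.
Qed.

Let inv_shift_pow_within_cont :
  {within `[0, +oo[, continuous (fun x : R => ((a + x) ^+ k.+2)^-1)}.
Proof.
by apply: continuous_in_subspaceT => x; rewrite inE /= in_itv /= andbT => /inv_shift_pow_cont.
Qed.

Lemma measurable_inv_shift_exprSS :
  measurable_fun (`[0, +oo[ : set R) (fun x : R => ((a + x) ^+ k.+2)^-1).
Proof. exact: subspace_continuous_measurable_fun. Qed.

Lemma integral_inv_shift_exprSS :
  (\int[lebesgue_measure]_(x in `[0%R, +oo[) (((a + x) ^+ k.+2)^-1)%:E =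
   (((k.+1)%:R * a ^+ k.+1)^-1)%:E)%E.
Proof.
rewrite (@ge0_continuous_FTC2y R _ F 0 0) //.
- by rewrite /F addr0 sub0e -EFinN mulNr opprK invfM.
- by move=> x /shift_gt0 ax_gt0; rewrite invr_ge0 exprn_ge0 // ltW.
- by move=> x /ltW /is_derive_F [].
- apply: cvg_at_right_filter; apply: differentiable_continuous.
  by apply/derivable1_diffP; case: (is_derive_F (lexx 0)).
- move=> x; rewrite in_itv /= andbT => /ltW x_ge0.
  by rewrite derive1E; case: (is_derive_F x_ge0).
Qed.

End InvPowIntegral.

Section L2Term.
Local Open Scope classical_set_scope.
Variables (R : realType) (c d2 : R) (n : nat).
Hypotheses (c_ge0 : 0 <= c) (d2_gt0 : 0 < d2) (n_gt0 : (0 < n)%N).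
Hypothesis c_le : c <= 2 * pi * ntilde d2 n.

Let a := ntilde d2 n.

Let a_gt0 : 0 < a.
Proof. by rewrite /a /ntilde divr_gt0 ?ltr0n ?mulr_gt0. Qed.

Lemma lfun_gt0 x : 0 < lfun c d2 n x.
Proof.
apply: lt_le_trans (lfun_ge_sqr _ c_ge0 c_le).
have sum_gt0 : 0 < a ^+ 2 + x ^+ 2 by rewrite ltr_pwDl ?sqr_ge0 ?exprn_gt0.
by rewrite !mulr_gt0 ?exprn_gt0 ?pi_gt0.
Qed.

(* [3/100 = 3/4 * 1/25], from [(2a + x)^2 <= 5 (a^2 + x^2)] (Cauchy-Schwarz). *)
Lemma lfun_ge_shift_expr4 x :
  3 / 100 * (2 * pi) ^+ 4 * (2 * a + x) ^+ 4 <= lfun c d2 n x.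
Proof.
apply: le_trans (lfun_ge_sqr _ c_ge0 c_le).
have cs : (2 * a + x) ^+ 2 <= 5 * (a ^+ 2 + x ^+ 2).
  by rewrite -subr_ge0 (_ : _ - _ = (a - 2 * x) ^+ 2) ?sqr_ge0 //; ring.
have cs2 : (2 * a + x) ^+ 4 <= 25 * (a ^+ 2 + x ^+ 2) ^+ 2.
  rewrite (_ : 4 = 2 * 2)%N // exprM (_ : 25 * _ = (5 * (a ^+ 2 + x ^+ 2)) ^+ 2); last by ring.
  by rewrite ler_sqr ?nnegrE ?sqr_ge0 // (le_trans _ cs) ?sqr_ge0.
rewrite -/a; have := exprn_ge0 4 (mulr_ge0 (ler0n R 2) (pi_ge0 R)); nra.
Qed.

Lemma inv_lfun_sqr_le x : 0 <= x ->
  (lfun c d2 n x)^-1 ^+ 2 <= (100 / 3) ^+ 2 / (2 * pi) ^+ 8 * ((2 * a + x) ^+ 8)^-1.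
Proof.
move=> x_ge0; set L := 3 / 100 * (2 * pi) ^+ 4 * (2 * a + x) ^+ 4.
have ax_gt0 : 0 < 2 * a + x := ltr_pwDl (mulr_gt0 (ltr0Sn R 1) a_gt0) x_ge0.
have L_gt0 : 0 < L by rewrite /L !mulr_gt0 ?invr_gt0 ?exprn_gt0 ?mulr_gt0 ?pi_gt0.
have -> : (100 / 3) ^+ 2 / (2 * pi) ^+ 8 * ((2 * a + x) ^+ 8)^-1 = L^-1 ^+ 2.
  have pi2_neq0 : 2 * pi != 0 :> R by rewrite gt_eqF // mulr_gt0 ?pi_gt0.
  by rewrite /L; move: pi2_neq0; set p := 2 * pi => ?; field; rewrite gt_eqF.
rewrite ler_sqr ?nnegrE ?invr_ge0 ?(ltW L_gt0) ?(ltW (lfun_gt0 x)) //.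
by rewrite lef_pV2 ?posrE ?lfun_gt0 // lfun_ge_shift_expr4.
Qed.

Lemma continuous_inv_lfun_sqr : continuous (fun x => (lfun c d2 n x)^-1 ^+ 2).
Proof.
move=> x; have inv_cont : {for x, continuous (fun y => (lfun c d2 n y)^-1)}.
  apply: continuousV; first by rewrite gt_eqF ?lfun_gt0.
  by apply/differentiable_continuous/derivable1_diffP; rewrite /lfun.
exact: continuous_comp inv_cont (@exprn_continuous R 2 _).
Qed.

Lemma L2sq_inv_l_le : (L2sq_inv_l c d2 n <=
  (2 * (100 / 3) ^+ 2 * d2 ^+ 7 / (7 * (2 * pi) ^+ 8) * (n%:R ^+ 7)^-1)%:E)%E.
Proof.
pose f x := (lfun c d2 n x)^-1 ^+ 2.
have f_ge0 x : 0 <= f x := sqr_ge0 _.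
have f_even : f =1 f \o -%R by move=> x; rewrite /f /= /lfun !mulrN !sqrrN.
have a2_gt0 : 0 < 2 * a by rewrite mulr_gt0.
rewrite /L2sq_inv_l (ge0_symfun_integralT f_ge0 continuous_inv_lfun_sqr f_even) -set_itvcy.
have -> : 2 * (100 / 3) ^+ 2 * d2 ^+ 7 / (7 * (2 * pi) ^+ 8) * (n%:R ^+ 7)^-1 =
    2 * ((100 / 3) ^+ 2 / (2 * pi) ^+ 8 * (7 * (2 * a) ^+ 7)^-1).
  have pi2_neq0 : 2 * pi != 0 :> R by rewrite gt_eqF // mulr_gt0 ?pi_gt0.
  rewrite /a /ntilde; move: pi2_neq0; set p := 2 * pi => ?.
  by field; rewrite pnatr_eq0 -lt0n n_gt0 gt_eqF.
set K := (100 / 3) ^+ 2 / (2 * pi) ^+ 8.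
have K_ge0 : 0 <= K by rewrite divr_ge0 ?exprn_ge0 // mulr_ge0 ?pi_ge0.
have g_ge0 (x : R) : 0 <= x -> 0 <= ((2 * a + x) ^+ 8)^-1.
  by move=> x_ge0; rewrite invr_ge0 exprn_ge0 // addr_ge0 // ltW.
rewrite EFinM lee_wpmul2l ?lee_fin // EFinM -(integral_inv_shift_exprSS 6 a2_gt0).
rewrite -ge0_integralZl //; last 2 first.
- by apply/measurable_EFinP; exact: measurable_inv_shift_exprSS.
- by move=> x; rewrite /= in_itv /= andbT lee_fin => /g_ge0.
apply: ge0_le_integral => //.
- by move=> x _; rewrite lee_fin.
- apply/measurable_EFinP; apply: measurable_funTS.
  exact: continuous_measurable_fun continuous_inv_lfun_sqr.
- apply: measurable_funeM; apply/measurable_EFinP.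
  exact: measurable_inv_shift_exprSS.
- move=> x; rewrite /= in_itv /= andbT => x_ge0.
  by rewrite -EFinM lee_fin inv_lfun_sqr_le.
Qed.

End L2Term.

Lemma tail_constant_le (R : realFieldType) (p d N : R) : 4 <= p -> 0 < d -> 0 < N ->
  2 * (100 / 3) ^+ 2 * d ^+ 7 / (7 * p ^+ 8) * (6 * N ^+ 6)^-1 <=
  5 * (2 * d) ^+ 7 / (48 * p ^+ 7 * N ^+ 6).
Proof.
move=> p_ge4 d_gt0 N_gt0; have p_gt0 : 0 < p by lra.
rewrite -subr_ge0.
have -> : 5 * (2 * d) ^+ 7 / (48 * p ^+ 7 * N ^+ 6) -
    2 * (100 / 3) ^+ 2 * d ^+ 7 / (7 * p ^+ 8) * (6 * N ^+ 6)^-1 =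
    d ^+ 7 / (p ^+ 8 * N ^+ 6) * (640 / 48 * p - 20000 / 378).
  by field; rewrite !gt_eqF.
apply: mulr_ge0; last lra.
apply: divr_ge0; first exact: exprn_ge0 (ltW d_gt0).
by apply: mulr_ge0; apply: exprn_ge0; apply: ltW.
Qed.

Lemma L2sq_inv_l_tail_le (R : realType) (c d2 : R) (N : nat) :
  0 < c -> 0 < d2 -> (0 < N)%N -> d2 * c / pi < N%:R ->
  (\sum_(N.+1 <= n <oo) L2sq_inv_l c d2 n <=
   (5 * (2 * d2) ^+ 7 / (48 * (2 * pi) ^+ 7 * N%:R ^+ 6))%:E)%E.
Proof.
move=> c_gt0 d2_gt0 N_gt0 N_gt.
have pi2_ge4 : 4 <= 2 * pi :> R by have := pi_ge2 R; lra.
set C := 2 * (100 / 3) ^+ 2 * d2 ^+ 7 / (7 * (2 * pi) ^+ 8).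
have C_ge0 : 0 <= C.
  apply: divr_ge0; first by rewrite mulr_ge0 // exprn_ge0 // ltW.
  by rewrite mulr_ge0 // exprn_ge0 // mulr_ge0 // pi_ge0.
have term_le n : (N < n)%N -> (L2sq_inv_l c d2 n <= (C * (n%:R ^+ 7)^-1)%:E)%E.
  move=> N_lt; have n_gt0 : (0 < n)%N := leq_ltn_trans (leq0n N) N_lt.
  have c_le : c <= 2 * pi * ntilde d2 n.
    by apply: (mul2pi_ntilde_ge d2_gt0); apply/ltW/(lt_le_trans N_gt); rewrite ler_nat ltnW.
  exact: L2sq_inv_l_le (ltW c_gt0) d2_gt0 n_gt0 c_le.
apply: lime_le.
  apply: is_cvg_nneseries => n _ _.
  by apply: integral_ge0 => x _; rewrite lee_fin sqr_ge0.
apply: nearW => M.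
apply: (@le_trans _ _ (\sum_(N.+1 <= n < M) (C * (n%:R ^+ 7)^-1)%:E)%E).
  rewrite big_nat_cond [leRHS]big_nat_cond.
  by apply: lee_sum => n /andP[/andP[N_lt _] _]; exact: term_le.
rewrite sumEFin lee_fin -mulr_sumr.
apply: le_trans (tail_constant_le pi2_ge4 d2_gt0 _); last by rewrite ltr0n.
by rewrite ler_wpM2l // sum_inv_exprSS_le.
Qed.

Theorem lemma7p1 (R : realType) (c d2 : R)
  (hc0 : 0 < c) (hc1 : c < Num.sqrt 2) (hd2 : 0 < d2) :
  (* minimum of l_{n_2} over R *)
  (forall n2 : nat,
     let m := if n2%:R <= d2 * c / (pi * Num.sqrt 2)
              then c ^+ 2 * (2 * pi * ntilde d2 n2) ^+ 2 + 1 - c ^+ 4 / 4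
              else (2 * pi * ntilde d2 n2) ^+ 4 + 1 in
     (forall xi : R, m <= lfun c d2 n2 xi) /\
     (exists xi : R, lfun c d2 n2 xi = m)) /\
  (* lower bound for large n_2 *)
  (forall n2 : nat, d2 * c / pi <= n2%:R ->
     forall xi : R,
       (2 * pi) ^+ 4 / 2 * (ntilde d2 n2 ^+ 2 + xi ^+ 2) ^+ 2 <= lfun c d2 n2 xi) /\
  (* tail estimate *)
  (forall N : nat, (0 < N)%N -> d2 * c / pi < N%:R ->
     (\sum_(N.+1 <= n2 <oo) L2sq_inv_l c d2 n2 <=
      (5 * (2 * d2) ^+ 7 / (48 * (2 * pi) ^+ 7 * N%:R ^+ 6))%:E)%E).
Proof.
split; first by move=> n; exact: lfun_minimum.
split; first by move=> n n_ge xi; exact: lfun_ge_half.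
by move=> N; exact: L2sq_inv_l_tail_le.
Qed.
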